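(* Consider any instance of the rescheduling problem $(1, h_1 \mid \Delta_{\max}\le k \mid \mu\Delta_{\max} + \sum_{j=1}^n w_j C_j)$ described in the context, and suppose it admits at least one feasible schedule. Then there exists an optimal schedule $\sigma^*$ such that: (a) $C_j(\sigma^* )\le C_j(\pi^* )$ for each job $J_j$ in the earlier schedule; (b) the earlier schedule contains at most one idle period; (c) each job in the earlier schedule that is processed after the idle period is processed exactly $\Delta_{\max}(\sigma^* )$ time units earlier than in $\pi^*$, i.e. $C_j(\pi^* )-C_j(\sigma^* )=\Delta_{\max}(\sigma^* )$; (d) the jobs in the earlier schedule processed after the idle period have consecutive indices $J_i,J_{i+1},\dots,J_{i+m}$; (e) the job $J_j$ of the earlier schedule processed immediately after the idle period satisfies $S_j(\pi^* )\ge T_2$; (f) the machine does not idle in the later schedule; (g) the first job in the later schedule has the maximum time deviation $\Delta_j$ among all jobs in the later schedule.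
   Context: An instance consists of $n$ jobs $J_1,\dots,J_n$, where $J_j$ has a positive integer processing time $p_j$ and a positive integer weight $w_j$, indexed in WSPT order $p_1/w_1\le\cdots\le p_n/w_n$; integers $T_1,T_2$ with $0\le T_1<T_2$ (machine unavailable during $[T_1,T_2]$); an integer $k$; a rational $\mu\ge 0$. The original schedule $\pi^*$ processes $J_1,\dots,J_n$ in order consecutively from time $0$ without idle time, so $S_j(\pi^* )=\sum_{i<j}p_i$, $C_j(\pi^* )=\sum_{i\le j}p_i$. A schedule $\sigma$ assigns start times $S_j(\sigma)\ge0$, non-preemptive single-machine processing with $C_j(\sigma)=S_j(\sigma)+p_j$, no overlaps, and each job has $C_j(\sigma)\le T_1$ or $S_j(\sigma)\ge T_2$. $\Delta_j=|C_j(\sigma)-C_j(\pi^* )|$, $\Delta_{\max}=\max_j\Delta_j$. Feasible means $\Delta_{\max}\le k$; optimal means feasible and minimizing $\mu\Delta_{\max}+\sum_j w_jC_j(\sigma)$. The earlier schedule consists of jobs with $C_j(\sigma)\le T_1$; the later schedule of jobs completed after $T_2$. An idle period of the earlier schedule is a maximal time interval of positive length, contained in $[0,c]$ where $c$ is the largest completion time of an earlier-schedule job, during which no job is processed. The machine idles in the later schedule if some time interval of positive length within $[T_2,c']$, where $c'$ is the largest completion time of a later-schedule job, contains no processing. Standing assumptions: some job has $C_j(\pi^* )>T_1$; with $j_1$ the smallest such index, $p_{\min}\le T_1<P$ and $T_2-S_{j_1}(\pi^* )\le k$, where $p_{\min}=\min_jp_j$, $P=\sum_jp_j$. *)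

From mathcomp Require Import all_boot all_order all_algebra.
From mathcomp Require Import reals.
Set Implicit Arguments. Unset Strict Implicit. Unset Printing Implicit Defensive.
Import Order.TTheory GRing.Theory Num.Theory.
Local Open Scope ring_scope.

Section Resched.
Variable R : realType.
Variable n : nat.
Variables (p w : 'I_n -> nat).
Variables (T1 T2 : nat).

Definition SstarN (j : 'I_n) : nat := (\sum_(i < n | (i < j)%N) p i)%N.
Definition CstarN (j : 'I_n) : nat := (\sum_(i < n | (i <= j)%N) p i)%N.
Definition Ptot : nat := (\sum_(i < n) p i)%N.

Definition Cj (S : 'I_n -> R) (j : 'I_n) : R := S j + (p j)%:R.

Definition valid_schedule (S : 'I_n -> R) : Prop :=
  (forall j, 0 <= S j) /\
  (forall i j, i != j -> Cj S i <= S j \/ Cj S j <= S i) /\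
  (forall j, Cj S j <= T1%:R \/ T2%:R <= S j).

Definition Delta (S : 'I_n -> R) (j : 'I_n) : R := `|Cj S j - (CstarN j)%:R|.
Definition Dmax (S : 'I_n -> R) : R := \big[Num.max/0]_(j < n) Delta S j.

Definition feasible (k : int) (S : 'I_n -> R) : Prop :=
  valid_schedule S /\ Dmax S <= k%:~R.

Definition objective (mu : rat) (S : 'I_n -> R) : R :=
  ratr mu * Dmax S + \sum_(j < n) (w j)%:R * Cj S j.

Definition optimal (k : int) (mu : rat) (S : 'I_n -> R) : Prop :=
  feasible k S /\ forall S', feasible k S' -> objective mu S <= objective mu S'.

Definition early (S : 'I_n -> R) (j : 'I_n) : bool := Cj S j <= T1%:R.
Definition later (S : 'I_n -> R) (j : 'I_n) : bool := T2%:R < Cj S j.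

Definition cEarly (S : 'I_n -> R) : R := \big[Num.max/0]_(j < n | early S j) Cj S j.
Definition cLater (S : 'I_n -> R) : R := \big[Num.max/T2%:R]_(j < n | later S j) Cj S j.

Definition free (S : 'I_n -> R) (a b : R) : Prop :=
  forall j, Cj S j <= a \/ b <= S j.

Definition idle_period (S : 'I_n -> R) (a b : R) : Prop :=
  [/\ 0 <= a, a < b, b <= cEarly S, free S a b &
   forall a' b', 0 <= a' -> a' <= a -> b <= b' -> b' <= cEarly S ->
     free S a' b' -> a' = a /\ b' = b].

Definition later_idles (S : 'I_n -> R) : Prop :=
  exists x y, [/\ T2%:R <= x, x < y, y <= cLater S & free S x y].
End Resched.

(* Every feasible schedule is dominated by a canonical one, determined by its
   set [E] of earlier jobs and its maximum deviation [D]: the earlier jobs run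
   in WSPT (that is, index) order, each as early as the deviation bound allows,
   and the later jobs run in index order from [T2] without idle time; this is
   an interchange argument.  Between two consecutive integers the canonical
   schedule is affine in [D], so integral bounds suffice, there are finitely
   many candidates and an optimal schedule exists; its canonical form is still
   optimal.  In that form, from an idle period on the earlier jobs are tight:
   each completes exactly [D] before [C*_j].  A later job whose index lies
   inside this tight stretch could be moved into the earlier schedule without
   changing any other earlier completion time, strictly improving the
   objective.  This yields (b)-(e); (a), (f) and (g) hold by construction. *)

From Pilot Require Import Defs.
From mathcomp Require Import all_boot all_order all_algebra.
From mathcomp Require Import reals.
From mathcomp Require Import zify ring lra.
Import Order.TTheory GRing.Theory Num.Theory.
Set Implicit Arguments. Unset Strict Implicit. Unset Printing Implicit Defensive.
Local Open Scope ring_scope.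

Lemma sum_pairs_ge0 (R : numDomainType) (n : nat) (G : 'I_n -> 'I_n -> R) :
  (forall j, 0 <= G j j) -> (forall l j : 'I_n, (l < j)%N -> 0 <= G j l + G l j) ->
  0 <= \sum_(j < n) \sum_(l < n) G j l.
Proof.
move=> Gdiag Gpair.
pose lower (j l : 'I_n) := if (l < j)%N then G j l else 0.
pose diag (j l : 'I_n) := if l == j then G j l else 0.
pose upper (j l : 'I_n) := if (j < l)%N then G j l else 0.
have splitG j l : G j l = lower j l + diag j l + upper j l.
  rewrite /lower /diag /upper; case: (ltngtP l j) => [h|h|/val_inj ->].
  - by rewrite -val_eqE /= (ltn_eqF h) !addr0.
  - by rewrite -val_eqE /= (gtn_eqF h) !add0r.
  - by rewrite eqxx add0r addr0.
under eq_bigr => j _ do under eq_bigr => l _ do rewrite splitG.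
under eq_bigr => j _ do rewrite !big_split /=.
rewrite !big_split /= [X in _ + X]exchange_big /= addrAC -big_split /=.
apply: addr_ge0; apply: sumr_ge0 => j _; last first.
  by apply: sumr_ge0 => l _; rewrite /diag; case: eqP => [->|].
rewrite -big_split /=; apply: sumr_ge0 => l _; rewrite /lower /upper.
by case: ifP => [/Gpair|] //; rewrite addr0.
Qed.

Lemma bigmax_witness (R : realDomainType) (I : finType) (P : pred I) (F : I -> R) c :
  0 < c -> c <= \big[Num.max/0]_(i | P i) F i -> exists2 i, P i & c <= F i.
Proof.
move=> c0 c_le; have /existsP[i /andP[Pi cFi]] : [exists i, P i && (c <= F i)]; last by exists i.
apply: contraLR c_le => /existsPn none; rewrite -ltNge; apply/bigmax_ltP; split => // i Pi.
by have := none i; rewrite Pi ltNge.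
Qed.

Lemma discrete_ivt (R : realDomainType) (f : nat -> R) x N : f 0%N <= x -> x < f N ->
  exists2 i, (i < N)%N & f i <= x < f i.+1.
Proof.
elim: N => [|N IH] f0x xfN; first by rewrite ltNge f0x in xfN.
have [fNx|xfN'] := lerP (f N) x; first by exists N; rewrite ?fNx.
by have [i iN fi] := IH f0x xfN'; exists i => //; apply: ltnW.
Qed.

Lemma bit_bounds (R : numDomainType) (s : R) (c : bool) : 0 <= s ->
  [/\ (0 : R) <= c%:R, (c%:R : R) <= 1, 0 <= s * c%:R & s * c%:R <= s].
Proof. by case: c; rewrite /= ?mulr1 ?mulr0 ?lexx ?ler01 => ->. Qed.

Lemma normr_natB (R : numDomainType) (x y : nat) : exists a : nat, `|(x%:R : R) - y%:R| = a%:R.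
Proof.
have [xy|yx] := leqP x y.
  by exists (y - x)%N; rewrite distrC natrB // ger0_norm // subr_ge0 ler_nat.
by exists (x - y)%N; rewrite natrB ?(ltnW yx) // ger0_norm // subr_ge0 ler_nat ltnW.
Qed.

(* [xs] lies at fraction [s] between two integers [x0 <= x1 <= x0 + 1]; unlike
   general interpolation, this shape is preserved by [Num.max]. *)
Definition unit_step (R : numDomainType) (s x0 x1 xs : R) := exists (a : nat) (d : bool),
  [/\ x0 = a%:R, x1 = a%:R + d%:R & xs = a%:R + s * d%:R].

Lemma unit_step_max (R : realFieldType) (s x0 x1 xs y0 y1 ys : R) : 0 <= s <= 1 ->
  unit_step s x0 x1 xs -> unit_step s y0 y1 ys ->
  unit_step s (Num.max x0 y0) (Num.max x1 y1) (Num.max xs ys).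
Proof.
move=> /andP[s0 s1] [a [d [-> -> ->]]] [b [e [-> -> ->]]].
have [d0 d1 sd0 sd1] := bit_bounds d s0.
have [e0 e1 se0 se1] := bit_bounds e s0.
case: (ltngtP a b) => [ab|ba|<-].
- have : (a%:R + 1 : R) <= b%:R by rewrite natr1 ler_nat.
  by exists b, e; split; rewrite max_r //; lra.
- have : (b%:R + 1 : R) <= a%:R by rewrite natr1 ler_nat.
  by exists a, d; split; rewrite max_l //; lra.
- exists a, (d || e); split; first by rewrite maxxx.
  + by case: d e {sd0 sd1 d0 d1 se0 se1 e0 e1} => [] [] /=; rewrite ?addr0 ?maxxx //;
      first [rewrite max_l; lra | rewrite max_r; lra].
  + by case: d e {sd0 sd1 d0 d1 se0 se1 e0 e1} => [] [] /=; rewrite ?mulr0 ?mulr1 ?addr0 ?maxxx //;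
      first [rewrite max_l; lra | rewrite max_r; lra].
Qed.

Section Rescheduling.
Variable R : realType.
Variables (n : nat) (p w : 'I_n -> nat) (T1 T2 : nat).
Hypothesis p_pos : forall j, (0 < p j)%N.
Hypothesis w_pos : forall j, (0 < w j)%N.
Hypothesis wspt : forall i j : 'I_n, (i <= j)%N -> (p i * w j <= p j * w i)%N.
Hypothesis T1_lt_T2 : (T1 < T2)%N.

Implicit Types (S : 'I_n -> R) (A E : pred 'I_n) (D : R) (i j : 'I_n).

Lemma start_lt_completion S j : S j < Cj p S j.
Proof. by rewrite /Cj ltrDl ltr0n. Qed.

Lemma Dmax_le S c : 0 <= c -> (forall j, Delta p S j <= c) -> Dmax p S <= c.
Proof. by move=> c0 Sc; rewrite /Dmax; elim/big_ind: _ => // x y; rewrite ge_max => -> ->. Qed.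

Lemma Delta_le_Dmax S j : Delta p S j <= Dmax p S.
Proof. by rewrite /Dmax (bigD1 j) //= le_max lexx. Qed.

Lemma Dmax_ge0 S : 0 <= Dmax p S.
Proof.
rewrite /Dmax; elim/big_ind: _ => // [x y x0 _|j _]; last exact: normr_ge0.
by rewrite le_max x0.
Qed.

(* [X] is any total order on the jobs (the order of their start times in some
   schedule) and [B j l] keeps the jobs [l] of the block of [j], which contains
   every [l >= j].  In the difference, the terms [(j, l)] and [(l, j)] with
   [l < j] pair up into a nonnegative quantity by the WSPT order. *)
Lemma wspt_sum_le A (X B : 'I_n -> 'I_n -> bool) :
  (forall i j, X i j || X j i) -> (forall j, X j j) ->
  (forall j, B j j) -> (forall l j : 'I_n, (l < j)%N -> B l j) ->
  \sum_(j < n | A j) (w j)%:R * (\sum_(l < n | A l && B j l && (l <= j)%N) (p l)%:R : R)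
  <= \sum_(j < n | A j) (w j)%:R * \sum_(l < n | A l && B j l && X l j) (p l)%:R.
Proof.
move=> Xtotal Xrefl Brefl Bup; rewrite -subr_ge0 -sumrB.
pose G (j l : 'I_n) : R := if A j && A l && B j l then
   (w j)%:R * (p l)%:R * (((X l j : nat)%:R : R) - ((l <= j)%N : nat)%:R) else 0.
have -> : \sum_(j < n | A j) ((w j)%:R * \sum_(l < n | A l && B j l && X l j) (p l)%:R -
     (w j)%:R * \sum_(l < n | A l && B j l && (l <= j)%N) (p l)%:R)
     = \sum_(j < n) \sum_(l < n) G j l.
  rewrite big_mkcond /=; apply: eq_bigr => j _.
  rewrite (big_mkcond (fun l => A l && B j l && X l j)).
  rewrite (big_mkcond (fun l => A l && B j l && (l <= j)%N)) /=.
  rewrite -mulrBr -sumrB big_distrr /= [RHS]big_mkcond /= /G.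
  case: (A j) => /=; last by rewrite big1_eq.
  apply: eq_bigr => l _.
  by case: (A l); case: (B j l); case: (X l j); case: (l <= j)%N;
     rewrite /= ?subrr ?mulr0 ?subr0 ?sub0r ?mulr1 ?mulrN ?mulrA //; lra.
apply: sum_pairs_ge0 => [j|l j lj].
  by rewrite /G Xrefl leqnn subrr mulr0; case: ifP.
rewrite /G (Bup _ _ lj) andbT (leqNgt j l) lj (ltnW lj) subr0 [A l && A j]andbC.
have wspt_lj : ((w j)%:R * (p l)%:R : R) <= (w l)%:R * (p j)%:R.
  by rewrite -!natrM ler_nat mulnC [(w l * _)%N]mulnC wspt // ltnW.
have := mulr_ge0 (ler0n R (w j)) (ler0n R (p l)).
case: (A j && A l) => /=; last by rewrite addr0.
move: (Xtotal l j); case: (X l j); case: (X j l); case: (B j l) => //= _;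
  rewrite ?subrr ?mulr0 ?mulr1 ?add0r ?addr0 ?sub0r ?mulrN1; lra.
Qed.

Lemma wsum_completion_ge S A (B : 'I_n -> 'I_n -> bool) (r C : 'I_n -> R) :
  (forall j, B j j) -> (forall l j : 'I_n, (l < j)%N -> B l j) ->
  (forall j, A j -> C j = r j + \sum_(l < n | A l && B j l && (l <= j)%N) (p l)%:R) ->
  (forall j, A j -> r j + \sum_(l < n | A l && B j l && (S l <= S j)) (p l)%:R <= Cj p S j) ->
  \sum_(j < n | A j) (w j)%:R * C j <= \sum_(j < n | A j) (w j)%:R * Cj p S j.
Proof.
move=> Brefl Bup Cdef S_ge; apply: le_trans (_ : \sum_(j < n | A j) (w j)%:R *
   (r j + \sum_(l < n | A l && B j l && (S l <= S j)) (p l)%:R) <= _); last first.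
  by apply: ler_sum => j Aj; rewrite ler_wpM2l ?ler0n ?S_ge.
under eq_bigr => j Aj do rewrite Cdef // mulrDr.
under [X in _ <= X]eq_bigr => j _ do rewrite mulrDr.
rewrite !big_split /= lerD2l.
by apply: wspt_sum_le => // i j; apply: le_total.
Qed.

Lemma idle_period_same_end S a a' b : idle_period p T1 S a b -> idle_period p T1 S a' b ->
  a = a'.
Proof.
case=> a0 _ b_le free_ab a_max [a'0 _ _ free_a'b a'_max].
have [aa'|a'a] := lerP a a'; first by have [] := a'_max a b a0 aa' (lexx b) b_le free_ab.
by have [] := a_max a' b a'0 (ltW a'a) (lexx b) b_le free_a'b.
Qed.



Definition disjoint_jobs S := forall i j, i != j -> Cj p S i <= S j \/ Cj p S j <= S i.

Section DisjointJobs.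
Variable S : 'I_n -> R.
Hypothesis S_disj : disjoint_jobs S.

Lemma start_neq i j : i != j -> S i != S j.
Proof.
move=> /S_disj ij; apply/eqP=> Sij.
by case: ij; rewrite /Cj Sij leNgt ltrDl ltr0n p_pos.
Qed.

Lemma sum_start_le A j : A j ->
  \sum_(i < n | A i && (S i <= S j)) (p i)%:R
  = (p j)%:R + \sum_(i < n | A i && (S i < S j)) (p i)%:R :> R.
Proof.
move=> Aj; rewrite (bigD1 j) /=; last by rewrite Aj lexx.
congr (_ + _); apply: eq_bigl => i; case: (A i) => //=.
case: (eqVneq i j) => [->|ij]; first by rewrite ltxx andbF.
by rewrite andbT lt_neqAle (start_neq ij).
Qed.

(* Induction on the number of [A]-jobs started before [j]: the last of them
   completes before [j] starts. *)
Lemma work_before_le_start A r : (forall i, A i -> r <= S i) ->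
  forall j, r <= S j -> r + \sum_(i < n | A i && (S i < S j)) (p i)%:R <= S j.
Proof.
move=> rA j; have [m] := ubnP #|[pred i | A i && (S i < S j)]|.
elim: m j => // m IH j; rewrite ltnS => card_before rSj.
case: (pickP [pred i | A i && (S i < S j)]) => [i0 i0_before | none]; last first.
  by rewrite big_pred0 ?addr0.
have [im /andP[Aim Sim_lt] im_max] := arg_maxP S i0_before.
have before_im i : (A i && (S i < S j)) && (i != im) = A i && (S i < S im).
  apply/idP/idP => [/andP[/andP[Ai Sij] /start_neq Sneq]|/andP[-> Siim]] /=.
    by rewrite Ai lt_neqAle Sneq /=; apply: im_max; rewrite /= Ai Sij.
  by rewrite (lt_trans Siim Sim_lt); apply: contraTneq Siim => ->; rewrite ltxx.
rewrite (bigD1 im) /=; last by rewrite Aim Sim_lt.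
rewrite (eq_bigl _ _ before_im).
have card_im : (#|[pred i | A i && (S i < S im)%R]| < m)%N.
  move: card_before; rewrite (cardD1 im) inE /= Aim Sim_lt add1n.
  apply: leq_ltn_trans; apply: subset_leq_card; apply/subsetP=> i.
  by rewrite !inE -before_im andbC.
have := IH im card_im (rA _ Aim).
have /S_disj : im != j by apply: contraTneq Sim_lt => ->; rewrite ltxx.
have := start_lt_completion S j; rewrite /Cj; lra.
Qed.

Lemma work_upto_le_completion A r : (forall i, A i -> r <= S i) -> forall j, A j ->
  r + \sum_(i < n | A i && (S i <= S j)) (p i)%:R <= Cj p S j.
Proof.
move=> rA j Aj; rewrite sum_start_le // /Cj.
have := work_before_le_start rA (rA j Aj); lra.
Qed.

Lemma work_le_some_completion A r : (forall i, A i -> r <= S i) -> forall j0, A j0 ->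
  exists2 j, A j & r + \sum_(i < n | A i) (p i)%:R <= Cj p S j.
Proof.
move=> rA j0 Aj0; have [j Aj j_max] := arg_maxP S Aj0.
exists j => //; have := work_upto_le_completion rA Aj.
by rewrite (eq_bigl A) // => i; case Ai: (A i) => //=; apply: j_max.
Qed.

End DisjointJobs.

(* Processing times and job sets are extended to all indices [l : nat] (by [0]
   and [false] from [n] on), so that prefix quantities can be defined by
   recursion on [l]: [Sstar l] is [S*_l] and [load E l] is the processing time
   of the jobs of [E] below [l]. *)
Definition proc (l : nat) : nat := oapp p 0%N (insub l).
Definition natpred E (l : nat) : bool := oapp E false (insub l).

Lemma procE (i : 'I_n) : proc i = p i.
Proof. by rewrite /proc valK. Qed.

Lemma natpredE E (i : 'I_n) : natpred E i = E i.
Proof. by rewrite /natpred valK. Qed.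

Lemma natpred_lt E l : natpred E l -> (l < n)%N.
Proof. by rewrite /natpred; case: insubP. Qed.

Definition Sstar (l : nat) : nat := (\sum_(0 <= i < l) proc i)%N.
Definition load E (l : nat) : nat := (\sum_(0 <= i < l | natpred E i) proc i)%N.

Lemma SstarS l : Sstar l.+1 = (Sstar l + proc l)%N.
Proof. by rewrite /Sstar big_nat_recr. Qed.

Lemma loadS E l : load E l.+1 = (load E l + if natpred E l then proc l else 0)%N.
Proof. by rewrite /load !(big_mkcond (fun l => natpred E l)) big_nat_recr. Qed.

Lemma loadS_in E (j : 'I_n) : E j -> load E j.+1 = (load E j + p j)%N.
Proof. by move=> Ej; rewrite loadS natpredE Ej procE. Qed.

Lemma loadS_notin E (j : 'I_n) : ~~ E j -> load E j.+1 = load E j.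
Proof. by move=> Ej; rewrite loadS natpredE (negbTE Ej) addn0. Qed.

Lemma Sstar_mono : {homo Sstar : l l' / (l <= l')%N}.
Proof. by move=> l l' ll'; rewrite /Sstar (big_cat_nat (leq0n l) ll') leq_addr. Qed.

Lemma load_mono E : {homo load E : l l' / (l <= l')%N}.
Proof. by move=> l l' ll'; rewrite /load (big_cat_nat (leq0n l) ll') leq_addr. Qed.

Lemma load_subset E E' l : (forall i, E i -> E' i) -> (load E l <= load E' l)%N.
Proof.
move=> sEE'; rewrite /load big_mkcond [X in (_ <= X)%N]big_mkcond /=; apply: leq_sum => i _.
by rewrite /natpred; case: insubP => //= u _ _; case Eu: (E u); rewrite ?(sEE' _ Eu).
Qed.

Lemma natpred_predU1 E (g : 'I_n) l : natpred (predU E (pred1 g)) l = natpred E l || (l == g).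
Proof.
rewrite /natpred; case: insubP => [u _ <-|] /=; first by rewrite -val_eqE.
by move=> ln; apply/esym/negbTE; apply: contra ln => /eqP ->; apply: ltn_ord.
Qed.

Lemma load_predC E l : (load E l + load (predC E) l)%N = Sstar l.
Proof.
rewrite /load /Sstar [RHS](bigID (natpred E)) /=; congr addn.
rewrite [LHS]big_mkcond [RHS]big_mkcond; apply: eq_bigr => i _.
by rewrite /natpred /proc; case: insubP => [u _ _|_].
Qed.

Lemma sum_natpredE E b l : (l <= n)%N ->
  (\sum_(b <= i < l | natpred E i) proc i = \sum_(i < n | E i && (b <= i) && (i < l)) p i)%N.
Proof.
move=> ln; rewrite (big_nat_widenl _ _ _ _ _ (leq0n b)) (big_nat_widen 0 l n) // big_mkord.
rewrite !big_mkcond [RHS]big_mkcond; apply: eq_bigr => i _ /=.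
by rewrite natpredE procE; case: (E i); case: (b <= i)%N; case: (i < l)%N.
Qed.

Lemma natr_loadE E l : (l <= n)%N ->
  (load E l)%:R = \sum_(i < n | E i && (i < l)%N) (p i)%:R :> R.
Proof.
move=> ln; rewrite /load sum_natpredE // natr_sum.
by apply: eq_bigl => i; rewrite leq0n andbT.
Qed.

Lemma SstarNE (j : 'I_n) : SstarN p j = Sstar j.
Proof.
have jn : (j <= n)%N := ltnW (ltn_ord j).
rewrite /SstarN /Sstar (big_nat_widen 0 j n) // big_mkord big_mkcond [RHS]big_mkcond.
by apply: eq_bigr => i _; rewrite procE.
Qed.

Lemma CstarNE (j : 'I_n) : CstarN p j = Sstar j.+1.
Proof.
rewrite /CstarN /Sstar (big_nat_widen 0 j.+1 n) // big_mkord big_mkcond [RHS]big_mkcond.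
by apply: eq_bigr => i _; rewrite procE.
Qed.

(* The earlier jobs of [E] are processed in index order, each as soon as
   possible but not before [S*_j - D], so that its completion time stays
   within [D] of [C*_j]; [makespan E D l] is the completion time of the last
   of them with index below [l]. *)
Fixpoint makespan E D (l : nat) : R :=
  if l is l'.+1 then
    if natpred E l' then Num.max (makespan E D l') ((Sstar l')%:R - D) + (proc l')%:R
    else makespan E D l'
  else 0.

(* The last job below [l] that waits for its release date [S*_j - D], or [0]. *)
Fixpoint block_start E D (l : nat) : nat :=
  if l is l'.+1 then
    if natpred E l' && (makespan E D l' < (Sstar l')%:R - D) then l'
    else block_start E D l'
  else 0.

Lemma makespanS_in E D (j : 'I_n) : E j ->
  makespan E D j.+1 = Num.max (makespan E D j) ((Sstar j)%:R - D) + (p j)%:R.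
Proof. by move=> Ej; rewrite /= natpredE Ej procE. Qed.

Lemma makespanS_notin E D l : ~~ natpred E l -> makespan E D l.+1 = makespan E D l.
Proof. by move=> /negbTE /= ->. Qed.

Lemma makespan_ge0 E D l : 0 <= makespan E D l.
Proof.
elim: l => //= l IH; case: ifP => // _.
by rewrite addr_ge0 ?le_max ?IH.
Qed.

Lemma makespan_mono E D : {homo makespan E D : l l' / (l <= l')%N >-> l <= l'}.
Proof.
apply: homo_leq => [//|y x z|l]; first exact: le_trans.
rewrite /=; case: ifP => // _.
by rewrite -[X in X <= _]addr0 lerD ?le_max ?lexx.
Qed.

Lemma load_le_makespan E D l : (load E l)%:R <= makespan E D l.
Proof.
elim: l => [|l IH]; first by rewrite /load big_geq.
rewrite loadS /=; case: ifP => _; rewrite ?addn0 // natrD.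
by rewrite lerD2r le_max IH.
Qed.

Lemma makespan_le_Sstar E D l : 0 <= D -> makespan E D l <= (Sstar l)%:R.
Proof.
move=> D0; elim: l => [|l IH]; first by rewrite /Sstar big_geq.
rewrite SstarS natrD /=; case: ifP => _.
  by rewrite lerD2r ge_max IH /= lerBlDr lerDl.
by have := ler0n R (proc l); lra.
Qed.

Lemma block_start_le E D l : (block_start E D l <= l)%N.
Proof. by elim: l => //= l IH; case: ifP => _ //; apply: leqW. Qed.

Lemma block_start_ltS E D l : (block_start E D l.+1 <= l)%N.
Proof. by rewrite /=; case: ifP => _ //; apply: block_start_le. Qed.

Lemma block_start_in E D l :
  (0 < block_start E D l)%N -> natpred E (block_start E D l).
Proof. by elim: l => //= l IH; case: ifP => [/andP[]|] // _ /IH. Qed.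

Lemma makespan_block E D l : 0 <= D ->
  makespan E D l = Num.max 0 ((Sstar (block_start E D l))%:R - D)
                   + (\sum_(block_start E D l <= i < l | natpred E i) proc i)%:R.
Proof.
move=> D0; elim: l => [|l IH].
  by rewrite /= big_geq // /Sstar big_geq // addr0 sub0r max_l // oppr_le0.
rewrite [makespan _ _ _.+1]/= [block_start _ _ _.+1]/=.
case El: (natpred E l) => /=; last first.
  by rewrite IH big_mkcond [in RHS]big_mkcond big_nat_recr ?block_start_le //= El addn0.
case: ltP => [makespan_lt|release_le].
  rewrite big_mkcond big_nat1 El max_r //.
  by rewrite (le_trans (makespan_ge0 _ _ _) (ltW makespan_lt)).
by rewrite big_mkcond big_nat_recr ?block_start_le //= El natrD addrA -big_mkcond -IH.
Qed.

Definition canon E D (j : 'I_n) : R :=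
  if E j then Num.max (makespan E D j) ((Sstar j)%:R - D)
  else (T2 + load (predC E) j)%:R.

Lemma canon_in E D j : E j -> canon E D j = Num.max (makespan E D j) ((Sstar j)%:R - D).
Proof. by rewrite /canon => ->. Qed.

Lemma canon_notin E D j : ~~ E j -> canon E D j = (T2 + load (predC E) j)%:R.
Proof. by rewrite /canon => /negbTE ->. Qed.

Lemma Cj_canon_in E D j : E j -> Cj p (canon E D) j = makespan E D j.+1.
Proof. by move=> Ej; rewrite /Cj canon_in // makespanS_in. Qed.

Lemma Cj_canon_notin E D j : ~~ E j -> Cj p (canon E D) j = (T2 + load (predC E) j.+1)%:R.
Proof. by move=> Ej; rewrite /Cj canon_notin // loadS_in // -natrD addnA. Qed.

Lemma makespan_ge_release E D j : E j -> (Sstar j.+1)%:R - D <= makespan E D j.+1.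
Proof.
by move=> Ej; rewrite makespanS_in // SstarS natrD procE addrAC lerD2r le_max lexx orbT.
Qed.

Lemma Cj_canon_le_start E D i j : E i -> E j -> (i < j)%N ->
  Cj p (canon E D) i <= canon E D j.
Proof.
move=> Ei Ej ij; rewrite Cj_canon_in // canon_in //.
by rewrite (le_trans (makespan_mono E D ij)) // le_max lexx.
Qed.

Lemma T1_lt_T2R : (T1%:R : R) < T2%:R.
Proof. by rewrite ltr_nat. Qed.

Section CanonFits.
Variables (E : pred 'I_n) (D : R).
Hypothesis D_ge0 : 0 <= D.
Hypothesis makespan_fits : makespan E D n <= T1%:R.

Lemma Cj_canon_le_T1 j : E j -> Cj p (canon E D) j <= T1%:R.
Proof. by move=> Ej; rewrite Cj_canon_in // (le_trans (makespan_mono _ _ (ltn_ord j))). Qed.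

Lemma T2_le_canon j : ~~ E j -> (T2%:R : R) <= canon E D j.
Proof. by move=> Ej; rewrite canon_notin // ler_nat leq_addr. Qed.

Lemma canon_valid : valid_schedule p T1 T2 (canon E D).
Proof.
have T12 := T1_lt_T2R.
split; [|split].
- move=> j; rewrite /canon; case: (E j); last exact: ler0n.
  by rewrite le_max makespan_ge0.
- have early_late i j : E i -> ~~ E j -> Cj p (canon E D) i <= canon E D j.
    by move=> Ei Ej; rewrite (le_trans (Cj_canon_le_T1 Ei)) ?(le_trans (ltW T12)) ?T2_le_canon.
  have late_late i j : ~~ E i -> ~~ E j -> (i < j)%N -> Cj p (canon E D) i <= canon E D j.
    move=> Ei Ej ij; rewrite Cj_canon_notin // canon_notin //.
    by rewrite ler_nat leq_add2l load_mono.
  have ordered (u v : 'I_n) : (u < v)%N ->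
      Cj p (canon E D) u <= canon E D v \/ Cj p (canon E D) v <= canon E D u.
    move=> uv; case Eu: (E u); case Ev: (E v).
    + by left; apply: Cj_canon_le_start.
    + by left; apply: early_late; rewrite ?Ev.
    + by right; apply: early_late; rewrite ?Eu.
    + by left; apply: late_late; rewrite ?Eu ?Ev.
  move=> i j ij; case: (ltngtP i j) => [/ordered //|/ordered [] ?|/val_inj eq_ij].
  + by right.
  + by left.
  + by rewrite eq_ij eqxx in ij.
- move=> j; case Ej: (E j); first by left; apply: Cj_canon_le_T1.
  by right; rewrite T2_le_canon ?Ej.
Qed.

Lemma load_lt_T2 : (load E n < T2)%N.
Proof.
rewrite -(ltr_nat R) (le_lt_trans (load_le_makespan E D n)) //.
exact: le_lt_trans makespan_fits T1_lt_T2R.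
Qed.

Lemma early_canon j : early p T1 (canon E D) j = E j.
Proof.
rewrite /early; case Ej: (E j); first exact: Cj_canon_le_T1.
by apply/negbTE; rewrite -ltNge Cj_canon_notin ?Ej // ltr_nat ltn_addr.
Qed.

Lemma later_canon j : later p T2 (canon E D) j = ~~ E j.
Proof.
rewrite /later; case Ej: (E j) => /=.
  by apply/negbTE; rewrite -leNgt (le_trans (Cj_canon_le_T1 Ej)) ?ltW ?T1_lt_T2R.
by rewrite (le_lt_trans (T2_le_canon (j := j) _)) ?start_lt_completion ?Ej.
Qed.

Lemma Delta_canon_in j : E j -> Delta p (canon E D) j = (Sstar j.+1)%:R - makespan E D j.+1.
Proof.
move=> Ej; rewrite /Delta Cj_canon_in // CstarNE distrC ger0_norm // subr_ge0.
exact: makespan_le_Sstar.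
Qed.

Lemma Delta_canon_in_le j : E j -> Delta p (canon E D) j <= D.
Proof. by move=> Ej; rewrite Delta_canon_in // lerBlDl -lerBlDr makespan_ge_release. Qed.

Lemma Delta_canon_notin j : ~~ E j -> Delta p (canon E D) j = T2%:R - (load E j)%:R.
Proof.
move=> Ej; rewrite /Delta Cj_canon_notin // CstarNE -(load_predC E j.+1) (loadS_notin Ej).
rewrite !natrD opprD addrACA subrr addr0 ger0_norm // subr_ge0 ler_nat.
by rewrite ltnW // (leq_ltn_trans _ load_lt_T2) // load_mono // ltnW.
Qed.

Lemma Dmax_canon_le : (forall j, ~~ E j -> T2%:R - (load E j)%:R <= D) ->
  Dmax p (canon E D) <= D.
Proof.
move=> late_le; apply: Dmax_le => // j; case Ej: (E j); first exact: Delta_canon_in_le.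
by rewrite Delta_canon_notin ?late_le ?Ej.
Qed.

Lemma canon_early_le j : early p T1 (canon E D) j -> Cj p (canon E D) j <= (CstarN p j)%:R.
Proof. by rewrite early_canon => Ej; rewrite Cj_canon_in // CstarNE makespan_le_Sstar. Qed.

Lemma canon_no_later_idle : ~ later_idles p T2 (canon E D).
Proof.
move=> [x [y [T2x xy y_le free_xy]]].
pose f t := (T2 + load (predC E) t)%:R : R.
have cLater_le : cLater p T2 (canon E D) <= f n.
  apply: bigmax_le => [|j]; first by rewrite ler_nat leq_addr.
  rewrite later_canon => Ej; rewrite Cj_canon_notin // ler_nat leq_add2l.
  exact: load_mono.
have f0x : f 0%N <= x by rewrite /f /load big_geq // addn0.
have [i _ /andP[fi_x x_fi]] := discrete_ivt f0x (lt_le_trans xy (le_trans y_le cLater_le)).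
have Ei : natpred (predC E) i.
  by apply: contraTT x_fi => nEi; rewrite /f loadS (negbTE nEi) addn0 -leNgt.
have nEio : predC E (Ordinal (natpred_lt Ei)) by rewrite -natpredE.
case: (free_xy (Ordinal (natpred_lt Ei))); rewrite ?Cj_canon_notin ?canon_notin //.
  by move=> /(lt_le_trans x_fi); rewrite ltxx.
by move=> /le_trans/(_ fi_x); rewrite leNgt xy.
Qed.

Lemma canon_later_first j : later p T2 (canon E D) j ->
  (forall i, later p T2 (canon E D) i -> canon E D j <= canon E D i) ->
  forall i, later p T2 (canon E D) i -> Delta p (canon E D) i <= Delta p (canon E D) j.
Proof.
rewrite later_canon => Ej j_first i; rewrite later_canon => Ei.
rewrite !Delta_canon_notin // lerD2l lerN2 ler_nat.
have [ji|ij] := leqP j i; first exact: load_mono.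
have := j_first i; rewrite later_canon Ei !canon_notin // ler_nat leq_add2l => /(_ isT) ji.
have := leq_trans (load_mono (predC E) ij) ji.
by rewrite loadS_in // -[X in (_ <= X)%N]addn0 leq_add2l leqNgt p_pos.
Qed.

End CanonFits.

Section Dominance.
Variable S : 'I_n -> R.
Hypothesis S_ge0 : forall j, 0 <= S j.
Hypothesis S_disj : disjoint_jobs S.
Hypothesis S_avoid : forall j, Cj p S j <= T1%:R \/ T2%:R <= S j.
Local Notation E := (early p T1 S).
Local Notation D := (Dmax p S).

Lemma release_le_start j : (Sstar j)%:R - D <= S j.
Proof.
have := Delta_le_Dmax S j; rewrite /Delta CstarNE SstarS natrD procE /Cj.
have := ler_norm ((Sstar j)%:R + (p j)%:R - (S j + (p j)%:R)); rewrite distrC; lra.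
Qed.

Lemma T2_le_start j : ~~ E j -> (T2%:R : R) <= S j.
Proof. by case: (S_avoid j) => // Cj_le; rewrite /early Cj_le. Qed.

Lemma block_release_le_start l i : (block_start E D l <= i)%N ->
  Num.max 0 ((Sstar (block_start E D l))%:R - D) <= S i.
Proof.
move=> bi; rewrite ge_max S_ge0 (le_trans _ (release_le_start i)) //.
by rewrite lerD2r ler_nat Sstar_mono.
Qed.

Lemma makespan_early_fits : makespan E D n <= T1%:R.
Proof.
rewrite makespan_block ?Dmax_ge0 // sum_natpredE // [X in _ + X]natr_sum.
set b := block_start E D n.
rewrite (eq_bigl (fun i => E i && (b <= i)%N)) => [|i]; last by rewrite ltn_ord andbT.
case: (pickP (fun i => E i && (b <= i)%N)) => [j0 j0_after|none].
  have rA i : E i && (b <= i)%N -> Num.max 0 ((Sstar b)%:R - D) <= S i.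
    by case/andP => _; apply: block_release_le_start.
  have [j /andP[Ej _] le_Cj] := work_le_some_completion S_disj rA j0_after.
  exact: le_trans le_Cj Ej.
rewrite big_pred0 // addr0.
have [b0|b_pos] := posnP b.
  by rewrite b0 /Sstar big_geq // sub0r max_l ?oppr_le0 ?Dmax_ge0.
have Eb := block_start_in b_pos; have bn := natpred_lt Eb.
by have := none (Ordinal bn); rewrite /= -natpredE Eb leqnn.
Qed.

Lemma late_Delta_le j : ~~ E j -> T2%:R - (load E j)%:R <= D.
Proof.
move=> Ej; have rA i : predC E i && (i < j.+1)%N -> (T2%:R : R) <= S i.
  by case/andP => /T2_le_start.
have [i /andP[Ei ij]] := work_le_some_completion S_disj rA (introT andP (conj Ej (ltnSn j))).
rewrite -natr_loadE // => T2_le_Cj.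
have := le_trans (ler_norm _) (Delta_le_Dmax S i); rewrite /Delta CstarNE.
have : ((Sstar i.+1)%:R : R) <= (Sstar j.+1)%:R by rewrite ler_nat Sstar_mono.
rewrite -(load_predC E j.+1) (loadS_notin Ej) natrD in T2_le_Cj *; lra.
Qed.

(* The earlier jobs of each block of the canonical schedule start in [S] no
   sooner than the block itself, and the later jobs no sooner than [T2]; within
   each group the index order is then best by [wsum_completion_ge]. *)
Lemma objective_canon_le mu : 0 <= mu ->
  objective p w mu (canon E D) <= objective p w mu S.
Proof.
move=> mu0; have D0 := Dmax_ge0 S.
rewrite /objective lerD //.
  by rewrite ler_wpM2l ?ler0q ?Dmax_canon_le ?makespan_early_fits //; apply: late_Delta_le.
rewrite (bigID E) [X in _ <= X](bigID E) /=; apply: lerD.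
- apply: (wsum_completion_ge (B := fun j l => (block_start E D j.+1 <= l)%N)
          (r := fun j => Num.max 0 ((Sstar (block_start E D j.+1))%:R - D))).
  + by move=> j; apply: block_start_ltS.
  + by move=> l j lj; apply: leq_trans (block_start_le E D l.+1) lj.
  + by move=> j Ej; rewrite Cj_canon_in // makespan_block // sum_natpredE // [X in _ + X]natr_sum.
  + move=> j Ej; apply: (work_upto_le_completion S_disj); last by rewrite Ej block_start_ltS.
    by move=> i /andP[_]; apply: block_release_le_start.
- apply: (wsum_completion_ge (B := fun _ _ => true) (r := fun _ => T2%:R)) => //.
  + move=> j Ej; rewrite Cj_canon_notin // natrD natr_loadE //.
    by congr (_ + _); apply: eq_bigl => i; rewrite andbT.
  + move=> j Ej; apply: (work_upto_le_completion S_disj); last by rewrite Ej.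
    by move=> i; rewrite andbT; apply: T2_le_start.
Qed.

End Dominance.


Lemma makespan_unit_step E (m : nat) (s : R) l : 0 <= s <= 1 ->
  exists (N : nat) (d : bool), [/\ makespan E m%:R l = N%:R,
    makespan E (m%:R + 1) l = N%:R - d%:R & makespan E (m%:R + s) l = N%:R - s * d%:R].
Proof.
case/andP=> s0 s1; elim: l => [|l [N [d [eq_m eq_m1 eq_ms]]]].
  by exists 0%N, false; rewrite /= !subr0 mulr0 subr0.
have [d0 d1 sd0 sd1] := bit_bounds d s0.
rewrite /=; case: (natpred E l); last by exists N, d.
rewrite eq_m eq_m1 eq_ms.
case: (ltnP (N + m) (Sstar l)) => [idle|busy].
  exists (Sstar l - m + proc l)%N, true.
  have mS : (m <= Sstar l)%N by apply: leq_trans (leq_addl _ _) (ltnW idle).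
  have idleR : (N%:R + m%:R + 1 : R) <= (Sstar l)%:R by rewrite -natrD natr1 ler_nat.
  by rewrite natrD natrB //; split; rewrite max_r /=; lra.
exists (N + proc l)%N, d.
have busyR : ((Sstar l)%:R : R) <= N%:R + m%:R by rewrite -natrD ler_nat.
by rewrite natrD; split; rewrite max_l; lra.
Qed.




(* For [m <= D <= m + 1] the canonical schedule is affine in [D], with integral
   values at [m] and [m + 1] that differ by at most one. *)
Section UnitStep.
Variables (E : pred 'I_n) (m : nat) (s : R).
Hypotheses (s_gt0 : 0 < s) (s_lt1 : s < 1).

Let s_itv : 0 <= s <= 1.
Proof. by rewrite !ltW. Qed.

Lemma Cj_canon_unit_step j : exists (N : nat) (d : bool),
  [/\ Cj p (canon E m%:R) j = N%:R, Cj p (canon E (m%:R + 1)) j = N%:R - d%:R,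
      Cj p (canon E (m%:R + s)) j = N%:R - s * d%:R & E j -> (N <= Sstar j.+1)%N].
Proof.
case Ej: (E j); last first.
  by exists (T2 + load (predC E) j.+1)%N, false; rewrite !Cj_canon_notin ?Ej // mulr0 !subr0.
have [N [d [eq_m eq_m1 eq_ms]]] := makespan_unit_step E m j.+1 s_itv.
exists N, d; rewrite !Cj_canon_in // eq_m eq_m1 eq_ms; split => // _.
by rewrite -(ler_nat R) -eq_m makespan_le_Sstar.
Qed.

Lemma Dmax_canon_unit_step :
  unit_step s (Dmax p (canon E m%:R)) (Dmax p (canon E (m%:R + 1))) (Dmax p (canon E (m%:R + s))).
Proof.
rewrite /Dmax; apply: (big_ind3 (unit_step s)).
- by exists 0%N, false; rewrite mulr0 !addr0.
- by move=> *; apply: unit_step_max.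
move=> j _; rewrite /Delta CstarNE; case Ej: (E j); last first.
  rewrite !Cj_canon_notin ?Ej //.
  have [a ->] := normr_natB R (T2 + load (predC E) j.+1) (Sstar j.+1).
  by exists a, false; rewrite mulr0 !addr0.
have [N [d [-> -> -> /(_ Ej) N_le]]] := Cj_canon_unit_step j.
have [d0 _ sd0 _] := bit_bounds d (ltW s_gt0).
have NS : (N%:R : R) <= (Sstar j.+1)%:R by rewrite ler_nat.
exists (Sstar j.+1 - N)%N, d; rewrite natrB //.
by rewrite !ler0_norm; try lra; split; lra.
Qed.

Lemma objective_canon_interp mu :
  objective p w mu (canon E (m%:R + s)) =
  (1 - s) * objective p w mu (canon E m%:R) + s * objective p w mu (canon E (m%:R + 1)).
Proof.
rewrite /objective; have [a [d [-> -> ->]]] := Dmax_canon_unit_step.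
have -> : \sum_(j < n) (w j)%:R * Cj p (canon E (m%:R + s)) j =
   \sum_(j < n) ((1 - s) * ((w j)%:R * Cj p (canon E m%:R) j) +
                 s * ((w j)%:R * Cj p (canon E (m%:R + 1)) j)).
  apply: eq_bigr => j _; have [N [c [-> -> -> _]]] := Cj_canon_unit_step j.
  ring.
by rewrite big_split /= -!big_distrr /=; ring.
Qed.

Lemma makespan_fits_unit_step : makespan E (m%:R + s) n <= T1%:R ->
  makespan E m%:R n <= T1%:R /\ makespan E (m%:R + 1) n <= T1%:R.
Proof.
have [N [d [-> -> ->]]] := makespan_unit_step E m n s_itv.
have [d0 d1 sd0 sd1] := bit_bounds d (ltW s_gt0).
move=> fits; suff N_le : (N%:R : R) <= T1%:R by split; lra.
rewrite ler_nat -ltnS -(ltr_nat R) -natr1.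
by have := s_lt1; case: d fits {d0 d1 sd0 sd1} => /=; rewrite ?mulr1n ?mulr0n ?mulr1 ?mulr0; lra.
Qed.

Lemma Dmax_canon_le_unit_step (k : int) : Dmax p (canon E (m%:R + s)) <= k%:~R ->
  Dmax p (canon E m%:R) <= k%:~R /\ Dmax p (canon E (m%:R + 1)) <= k%:~R.
Proof.
have [a [d [-> -> ->]]] := Dmax_canon_unit_step.
have [_ _ sd0 _] := bit_bounds d (ltW s_gt0).
move=> Dk; split; first lra.
case: d Dk {sd0} => /=; rewrite ?mulr0n ?mulr0 ?addr0 // mulr1n mulr1 => Dk.
have : (a%:R : R) < k%:~R by have := s_gt0; lra.
rewrite -[a%:R]/((a%:Z)%:~R : R) ltr_int => ak.
have : ((a%:Z + 1)%:~R : R) <= k%:~R by rewrite ler_int; lia.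
by rewrite intrD.
Qed.

End UnitStep.

Lemma integral_budget E D (k : int) mu : 0 <= D -> makespan E D n <= T1%:R ->
  Dmax p (canon E D) <= k%:~R ->
  exists m : nat, [/\ (m <= Num.truncn D + 1)%N, makespan E m%:R n <= T1%:R,
     Dmax p (canon E m%:R) <= k%:~R &
     objective p w mu (canon E m%:R) <= objective p w mu (canon E D)].
Proof.
move=> D0; set m := Num.truncn D; have /andP[mD Dm1] := truncn_itv D0.
rewrite -/m -natr1 in mD Dm1; set s := D - m%:R.
have -> : D = m%:R + s by rewrite /s addrC subrK.
have [s_le0|s_gt0] := lerP s 0.
  have -> : s = 0 by apply/le_anti; rewrite s_le0 subr_ge0.
  by rewrite addr0 => fits Dk; exists m; rewrite leq_addr.
have s_lt1 : s < 1 by rewrite /s; lra.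
move=> /(makespan_fits_unit_step s_gt0 s_lt1) [fits0 fits1].
move=> /(Dmax_canon_le_unit_step s_gt0 s_lt1) [Dk0 Dk1].
rewrite objective_canon_interp //.
set o0 := objective _ _ _ (canon E m%:R); set o1 := objective _ _ _ (canon E (m%:R + 1)).
have [o01|o10] := lerP o0 o1.
  exists m; rewrite leq_addr -/o0; split => //.
  have : 0 <= s * (o1 - o0) by rewrite mulr_ge0 ?subr_ge0 // ltW.
  lra.
exists m.+1; rewrite -natr1 addn1 -/o1; split => //.
have : 0 <= (1 - s) * (o0 - o1) by rewrite mulr_ge0 // subr_ge0 ltW.
lra.
Qed.

Lemma makespan_eq_prefix E E' D l : (forall x, (x < l)%N -> natpred E x = natpred E' x) ->
  makespan E D l = makespan E' D l.
Proof.
elim: l => //= l IH EE'.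
have -> : makespan E D l = makespan E' D l by apply: IH => x xl; rewrite EE' // ltnW.
by rewrite EE'.
Qed.

Lemma makespan_last_in E D l : makespan E D l = 0 \/
  exists2 i, E i && (i < l)%N & makespan E D l = makespan E D i.+1.
Proof.
elim: l => [|l IH]; first by left.
case El: (natpred E l).
  right; exists (Ordinal (natpred_lt El)) => //=.
  by rewrite -natpredE El ltnSn.
rewrite makespanS_notin ?El //; case: IH => [->|[i /andP[Ei il] ->]]; first by left.
by right; exists i; rewrite // Ei ltnW.
Qed.

(* [l] is anchored when the earlier jobs below [l] are finished by the
   release date [S*_l - D]: from then on every earlier job completes exactly
   [D] time units before [C*_j]. *)
Definition anchored E D (l : nat) : bool := makespan E D l <= (Sstar l)%:R - D.

Lemma anchoredW E D l0 l : anchored E D l0 -> (l0 <= l)%N -> anchored E D l.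
Proof.
move=> anch0 /subnK <-; elim: (l - l0)%N => //= t IH.
rewrite /anchored addSn [makespan _ _ _.+1]/= SstarS natrD; case: ifP => _.
  by rewrite (max_r IH) addrAC.
by rewrite addrAC (le_trans IH) // lerDl.
Qed.

Lemma makespan_anchored E D l0 l : anchored E D l0 -> (l0 <= l)%N -> natpred E l ->
  makespan E D l.+1 = (Sstar l.+1)%:R - D.
Proof.
move=> anch0 l0l El.
by rewrite [makespan _ _ _.+1]/= El SstarS natrD (max_r (anchoredW anch0 l0l)) addrAC.
Qed.

Lemma makespan_insert E D (g : 'I_n) t l : anchored E D g -> (g < t)%N -> (t < l)%N ->
  natpred E t -> makespan (predU E (pred1 g)) D l = makespan E D l.
Proof.
set E' := predU E (pred1 g) => anch_g gt.
have anch'_g : anchored E' D g.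
  rewrite /anchored (makespan_eq_prefix _ (E' := E)) // => x xg.
  by rewrite natpred_predU1 (ltn_eqF xg) orbF.
elim: l => // l IH tl Et; case El: (natpred E l).
  have gl : (g <= l)%N by rewrite ltnW // (leq_trans gt) // -ltnS.
  rewrite (makespan_anchored anch'_g gl) ?natpred_predU1 ?El //.
  by rewrite (makespan_anchored anch_g gl).
have lg : (l == g) = false by apply: gtn_eqF; rewrite (leq_trans gt) // -ltnS.
rewrite !makespanS_notin ?natpred_predU1 ?El ?lg // IH //.
by rewrite ltn_neqAle -ltnS tl andbT; apply: contraFneq El => <-.
Qed.

Lemma canon_in_mono E D i j : E i -> E j -> (i <= j)%N -> canon E D i <= canon E D j.
Proof.
move=> Ei Ej; rewrite leq_eqVlt => /orP[/eqP/val_inj-> //|ij].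
exact: le_trans (ltW (start_lt_completion _ i)) (Cj_canon_le_start _ Ei Ej ij).
Qed.

Lemma canon_in_le_index E D i j : E i -> E j -> canon E D i <= canon E D j -> (i <= j)%N.
Proof.
move=> Ei Ej; apply: contraTT; rewrite -!ltnNge -ltNge => ji.
exact: lt_le_trans (start_lt_completion _ j) (Cj_canon_le_start _ Ej Ei ji).
Qed.

Definition structured S : Prop :=
  [/\ forall j, early p T1 S j -> Cj p S j <= (CstarN p j)%:R,
      forall a b a' b', idle_period p T1 S a b -> idle_period p T1 S a' b' ->
        a = a' /\ b = b',
      forall a b, idle_period p T1 S a b ->
        [/\ forall j, early p T1 S j -> b <= S j -> (CstarN p j)%:R - Cj p S j = Dmax p S,
            forall i j l : 'I_n, (i <= l)%N -> (l <= j)%N ->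
              early p T1 S i -> b <= S i -> early p T1 S j -> b <= S j ->
              early p T1 S l /\ b <= S l &
            forall j, early p T1 S j -> b <= S j ->
              (forall i, early p T1 S i -> b <= S i -> S j <= S i) -> (T2 <= SstarN p j)%N],
      ~ later_idles p T2 S &
      forall j, later p T2 S j -> (forall i, later p T2 S i -> S j <= S i) ->
        forall i, later p T2 S i -> Delta p S i <= Delta p S j].

Section CanonImprovement.
Variables (E : pred 'I_n) (D : R).
Hypothesis D_ge0 : 0 <= D.
Hypothesis makespan_fits : makespan E D n <= T1%:R.
Hypothesis late_dev : forall j, ~~ E j -> T2%:R - (load E j)%:R <= D.

Lemma Dmax_canon_anchored j : E j -> anchored E D j -> Dmax p (canon E D) = D.
Proof.
move=> Ej anch; apply/le_anti; rewrite Dmax_canon_le //=.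
rewrite (le_trans _ (Delta_le_Dmax _ j)) // Delta_canon_in //.
by rewrite (makespan_anchored anch) ?natpredE // opprB addrC subrK.
Qed.

(* Moving a later job [g] into a tight stretch of the earlier schedule keeps
   all other earlier completion times, since the earlier job [jj] after [g]
   already absorbs the extra processing time. *)
Lemma canon_insert_better mu (g jj : 'I_n) : 0 <= mu -> ~~ E g -> anchored E D g ->
  E jj -> (g < jj)%N ->
  [/\ valid_schedule p T1 T2 (canon (predU E (pred1 g)) D),
      Dmax p (canon (predU E (pred1 g)) D) <= Dmax p (canon E D) &
      objective p w mu (canon (predU E (pred1 g)) D) < objective p w mu (canon E D)].
Proof.
move=> mu0 Eg anch_g Ejj gjj; set E' := predU E (pred1 g).
have E'_prefix l : (l <= g)%N -> makespan E' D l = makespan E D l.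
  move=> lg; apply: makespan_eq_prefix => x xl.
  by rewrite natpred_predU1 (ltn_eqF (leq_trans xl lg)) orbF.
have fits' : makespan E' D n <= T1%:R.
  by rewrite (makespan_insert anch_g gjj (ltn_ord jj)) ?natpredE.
have late' j : ~~ E' j -> T2%:R - (load E' j)%:R <= D.
  rewrite /E' /= negb_or => /andP[nEj _]; apply: le_trans (late_dev nEj).
  by rewrite lerD2l lerN2 ler_nat load_subset // => i Ei; rewrite /= Ei.
have Dmax' : Dmax p (canon E' D) <= Dmax p (canon E D).
  by rewrite (Dmax_canon_anchored Ejj (anchoredW anch_g (ltnW gjj))) Dmax_canon_le.
split => //; first exact: canon_valid.
rewrite /objective ler_ltD ?ler_wpM2l ?ler0q //.
rewrite (bigD1 g) // [X in _ < X](bigD1 g) // ltr_leD //.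
  rewrite ltr_pM2l ?ltr0n // Cj_canon_in ?(Cj_canon_notin _ Eg) /E' /= ?eqxx ?orbT //.
  apply: le_lt_trans (makespan_mono _ _ (ltn_ord g)) _; apply: le_lt_trans fits' _.
  by rewrite ltr_nat (leq_trans T1_lt_T2) // leq_addr.
apply: ler_sum => i /= ig; rewrite ler_wpM2l //.
case Ei: (E i).
  rewrite [Cj p (canon E D) i]Cj_canon_in // Cj_canon_in; last by rewrite /E' /= Ei.
  have [ig'|gi] := ltnP i g; first by rewrite E'_prefix.
  rewrite (makespan_insert anch_g _ (ltnSn i)) ?natpredE //.
  by rewrite ltn_neqAle val_eqE eq_sym ig gi.
have nE'i : ~~ E' i by rewrite /E' /= Ei (negbTE ig).
rewrite (Cj_canon_notin _ nE'i) Cj_canon_notin ?Ei // ler_nat leq_add2l load_subset //.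
by move=> x; rewrite /= negb_or => /andP[].
Qed.

Lemma canon_idle_period a b : idle_period p T1 (canon E D) a b ->
  exists j0 : 'I_n, [/\ E j0, canon E D j0 = b, makespan E D j0 < (Sstar j0)%:R - D &
                 makespan E D j0 <= a].
Proof.
case=> a0 ab b_le free_ab a_max.
have cEarlyE : cEarly p T1 (canon E D) = \big[Num.max/0]_(j | E j) Cj p (canon E D) j.
  by apply: eq_bigl => j; rewrite early_canon.
have [j1 Ej1 b_Cj1] : exists2 j, E j & b <= Cj p (canon E D) j.
  by apply: bigmax_witness (le_lt_trans a0 ab) _; rewrite -cEarlyE.
have b_j1 : b <= canon E D j1.
  by case: (free_ab j1) => // /(le_trans b_Cj1); rewrite leNgt ab.
pose J := [pred i | E i && (b <= canon E D i)].
have [jm /andP[Ejm b_jm] jm_min] :=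
  @arg_minP _ R _ j1 J (canon E D) (introT andP (conj Ej1 b_j1)).
have free_a_jm : Defs.free p (canon E D) a (canon E D jm).
  move=> i; case: (free_ab i) => [|b_i]; [by left | right].
  case Ei: (E i); first by apply: jm_min; rewrite /= Ei b_i.
  apply: le_trans (ltW (start_lt_completion _ jm)) _.
  rewrite (le_trans (Cj_canon_le_T1 makespan_fits Ejm)) // (le_trans (ltW T1_lt_T2R)) //.
  by rewrite canon_notin ?Ei // ler_nat leq_addr.
have jm_le_c : canon E D jm <= cEarly p T1 (canon E D).
  rewrite cEarlyE (le_trans (ltW (start_lt_completion _ jm))) //.
  exact: le_bigmax_cond.
have [_ jm_b] := a_max a (canon E D jm) a0 (lexx a) b_jm jm_le_c free_a_jm.
have makespan_le_a : makespan E D jm <= a.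
  have [->//|[i /andP[Ei ijm] m_eq]] := makespan_last_in E D jm.
  rewrite m_eq -Cj_canon_in //; case: (free_ab i) => // b_le_i.
  have : Cj p (canon E D) i <= b.
    by rewrite -jm_b Cj_canon_in // canon_in // -m_eq le_max lexx.
  by move/(lt_le_trans (start_lt_completion _ i)); rewrite ltNge b_le_i.
exists jm; split => //.
move: jm_b; rewrite canon_in //; case: leP => // _ jm_b.
by move: ab; rewrite -jm_b ltNge makespan_le_a.
Qed.

Section Optimal.
Variables (k : int) (mu : rat).
Hypothesis mu_ge0 : 0 <= mu.
Hypothesis Dmax_le_k : Dmax p (canon E D) <= k%:~R.
Hypothesis canon_opt : forall S, feasible p T1 T2 k S ->
  objective p w mu (canon E D) <= objective p w mu S.

Lemma no_gap_after_anchor j0 j l : anchored E D j0 -> E j -> (j0 <= l < j)%N -> natpred E l.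
Proof.
move=> anch0 Ej /andP[j0l lj]; apply/negPn/negP => nEl.
have nEg : ~~ E (Ordinal (ltn_trans lj (ltn_ord j))) by rewrite -natpredE.
have [valid' Dmax' better] := canon_insert_better mu_ge0 nEg (anchoredW anch0 j0l) Ej lj.
have := canon_opt (conj valid' (le_trans Dmax' Dmax_le_k)).
by rewrite leNgt better.
Qed.

Lemma makespan_after_anchor j0 j : E j0 -> anchored E D j0 -> E j -> (j0 < j)%N ->
  makespan E D j = (Sstar j)%:R - D.
Proof.
move=> Ej0 anch0 Ej j0j.
have j_pred : j = j.-1.+1 :> nat by rewrite prednK // (leq_ltn_trans _ j0j).
have j0j' : (j0 <= j.-1)%N by rewrite -ltnS -j_pred.
rewrite j_pred (makespan_anchored anch0 j0j') //.
have [<-|_] := eqVneq (j0 : nat) j.-1; first by rewrite natpredE.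
by apply: (no_gap_after_anchor anch0 Ej); rewrite j0j' ltn_predL (leq_ltn_trans _ j0j).
Qed.

Lemma canon_idle_unique a b a' b' : idle_period p T1 (canon E D) a b ->
  idle_period p T1 (canon E D) a' b' -> a = a' /\ b = b'.
Proof.
move=> idle idle'.
have [j0 [Ej0 j0_b j0_lt _]] := canon_idle_period idle.
have [j1 [Ej1 j1_b j1_lt _]] := canon_idle_period idle'.
suff j01 : j0 = j1.
  rewrite -j0_b -j1_b -j01 in idle idle' *.
  by split => //; apply: idle_period_same_end idle idle'.
have [lt|lt|/val_inj //] := ltngtP j0 j1.
- by move: j1_lt; rewrite (makespan_after_anchor Ej0 (ltW j0_lt) Ej1 lt) ltxx.
- by move: j0_lt; rewrite (makespan_after_anchor Ej1 (ltW j1_lt) Ej0 lt) ltxx.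
Qed.

Lemma canon_idle_after_Delta a b : idle_period p T1 (canon E D) a b ->
  forall j, early p T1 (canon E D) j -> b <= canon E D j ->
  (CstarN p j)%:R - Cj p (canon E D) j = Dmax p (canon E D).
Proof.
move=> /canon_idle_period [j0 [Ej0 <- /ltW anch0 _]] j.
rewrite (early_canon makespan_fits) => Ej /(canon_in_le_index Ej0 Ej) j0j.
rewrite (Dmax_canon_anchored Ej0 anch0) CstarNE Cj_canon_in //.
by rewrite (makespan_anchored anch0 j0j) ?natpredE // opprB addrC subrK.
Qed.

Lemma canon_idle_after_consecutive a b : idle_period p T1 (canon E D) a b ->
  forall i j l : 'I_n, (i <= l)%N -> (l <= j)%N ->
  early p T1 (canon E D) i -> b <= canon E D i -> early p T1 (canon E D) j -> b <= canon E D j ->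
  early p T1 (canon E D) l /\ b <= canon E D l.
Proof.
move=> /canon_idle_period [j0 [Ej0 <- /ltW anch0 _]] i j l il lj.
rewrite !(early_canon makespan_fits) => Ei j0i Ej _.
have j0l := leq_trans (canon_in_le_index Ej0 Ei j0i) il.
have El : E l.
  move: lj; rewrite leq_eqVlt => /orP[/eqP/val_inj -> //|lj].
  by rewrite -natpredE (no_gap_after_anchor anch0 Ej) // j0l.
by split => //; apply: canon_in_mono.
Qed.

Lemma canon_idle_first_after_T2 a b : idle_period p T1 (canon E D) a b ->
  forall j, early p T1 (canon E D) j -> b <= canon E D j ->
  (forall i, early p T1 (canon E D) i -> b <= canon E D i -> canon E D j <= canon E D i) ->
  (T2 <= SstarN p j)%N.
Proof.
move=> /canon_idle_period [j0 [Ej0 <- j0_lt _]] j.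
rewrite (early_canon makespan_fits) => Ej j0j _.
rewrite SstarNE (leq_trans _ (Sstar_mono (canon_in_le_index Ej0 Ej j0j))) // leqNgt.
apply/negP; rewrite -(ltr_nat R) => Sj0_lt.
have load_le := load_le_makespan E D j0.
case: (boolP [exists f : 'I_n, (f < j0)%N && ~~ E f]) => [/existsP[f /andP[fj0 nEf]]|none].
  have := late_dev nEf.
  have : ((load E f)%:R : R) <= (load E j0)%:R by rewrite ler_nat load_mono // ltnW.
  lra.
have load_C0 : load (predC E) j0 = 0%N.
  rewrite /load big_nat_cond big_pred0 // => x; apply/negbTE/andP => -[/andP[_ xj0] Cx].
  have : predC E (Ordinal (natpred_lt Cx)) by rewrite -natpredE.
  move=> nEx; move/negP: none; apply; apply/existsP.
  by exists (Ordinal (natpred_lt Cx)); rewrite xj0.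
by move: j0_lt D_ge0; rewrite -(load_predC E j0) load_C0 addn0; lra.
Qed.

Lemma canon_structured : structured (canon E D).
Proof.
split.
- exact: canon_early_le.
- exact: canon_idle_unique.
- move=> a b idle; split.
  + exact: canon_idle_after_Delta idle.
  + exact: canon_idle_after_consecutive idle.
  + exact: canon_idle_first_after_T2 idle.
- exact: canon_no_later_idle.
- exact: canon_later_first.
Qed.

End Optimal.

End CanonImprovement.

Lemma canon_integral_dominates (k : int) mu S : 0 <= mu -> feasible p T1 T2 k S ->
  exists m : nat, [/\ (m < `|k| + 2)%N, makespan (early p T1 S) m%:R n <= T1%:R,
    Dmax p (canon (early p T1 S) m%:R) <= k%:~R &
    objective p w mu (canon (early p T1 S) m%:R) <= objective p w mu S].
Proof.
move=> mu0 [[S_ge0 [S_disj S_avoid]] Dk].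
have D0 := Dmax_ge0 S; have fits := makespan_early_fits S_ge0 S_disj.
have Dk' : Dmax p (canon (early p T1 S) (Dmax p S)) <= k%:~R.
  by rewrite (le_trans _ Dk) // Dmax_canon_le // => j; apply: late_Delta_le.
have [m [m_le fits_m Dk_m obj_m]] := integral_budget mu D0 fits Dk'.
exists m; split => //; last first.
  exact: le_trans obj_m (objective_canon_le S_ge0 S_disj S_avoid mu0).
have /andP[trunc_le _] := truncn_itv D0.
have : ((Num.truncn (Dmax p S))%:Z%:~R : R) <= k%:~R by apply: le_trans trunc_le Dk.
by rewrite ler_int; lia.
Qed.

Lemma exists_optimal (k : int) mu : 0 <= mu -> (exists S, feasible p T1 T2 k S) ->
  exists S, optimal p w T1 T2 k mu S.
Proof.
move=> mu0 [S0 S0_feas].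
pose cand (x : {ffun 'I_n -> bool} * 'I_(`|k| + 2)) := canon (fun j => x.1 j) (x.2 : nat)%:R.
pose admissible (x : {ffun 'I_n -> bool} * 'I_(`|k| + 2)) :=
  (makespan (fun j => x.1 j) (x.2 : nat)%:R n <= T1%:R) && (Dmax p (cand x) <= k%:~R).
have dominated S : feasible p T1 T2 k S ->
    exists2 x, admissible x & objective p w mu (cand x) <= objective p w mu S.
  move=> S_feas; have [m [mK fits Dk obj]] := canon_integral_dominates mu0 S_feas.
  have E_ffun : (fun j => [ffun j => early p T1 S j] j) = early p T1 S.
    by apply: boolp.funext => j; rewrite ffunE.
  by exists ([ffun j => early p T1 S j], Ordinal mK); rewrite /admissible /cand /= E_ffun ?fits.
have [x0 adm_x0 _] := dominated S0 S0_feas.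
have [xo /andP[fits Dk] xo_min] := arg_minP (fun x => objective p w mu (cand x)) adm_x0.
exists (cand xo); split; first by split=> //; apply: canon_valid fits.
move=> S S_feas; have [x adm_x le_x] := dominated S S_feas.
exact: le_trans (xo_min x adm_x) le_x.
Qed.

Lemma exists_structured_optimal (k : int) mu : 0 <= mu -> (exists S, feasible p T1 T2 k S) ->
  exists S, optimal p w T1 T2 k mu S /\ structured S.
Proof.
move=> mu0 /(exists_optimal mu0) [S [[[S_ge0 [S_disj S_avoid]] Dk] S_opt]].
pose E := early p T1 S; pose D := Dmax p S.
have fits : makespan E D n <= T1%:R := makespan_early_fits S_ge0 S_disj.
have late_dev j : ~~ E j -> T2%:R - (load E j)%:R <= D := late_Delta_le S_disj S_avoid (j := j).
have canon_le_S := objective_canon_le S_ge0 S_disj S_avoid mu0.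
have Dk' : Dmax p (canon E D) <= k%:~R by rewrite (le_trans _ Dk) // Dmax_canon_le ?Dmax_ge0.
have canon_opt S' : feasible p T1 T2 k S' -> objective p w mu (canon E D) <= objective p w mu S'.
  by move=> /S_opt; apply: le_trans canon_le_S.
exists (canon E D); split.
  by split=> //; split=> //; apply: canon_valid fits.
exact (canon_structured (Dmax_ge0 S) fits late_dev mu0 Dk' canon_opt).
Qed.

End Rescheduling.

Theorem lemma2 (R : realType) (n : nat) (p w : 'I_n -> nat) (T1 T2 : nat)
  (k : int) (mu : rat)
  (p_pos : forall j, (0 < p j)%N) (w_pos : forall j, (0 < w j)%N)
  (wspt : forall i j : 'I_n, (i <= j)%N -> (p i * w j <= p j * w i)%N)
  (hT : (T1 < T2)%N) (hmu : 0 <= mu)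
  (hex : exists j, (T1 < CstarN p j)%N)
  (hpmin : exists j, (p j <= T1)%N)
  (hP : (T1 < Ptot p)%N)
  (hj1 : forall j1 : 'I_n, (T1 < CstarN p j1)%N ->
           (forall i : 'I_n, (i < j1)%N -> (CstarN p i <= T1)%N) ->
           (T2%:Z - (SstarN p j1)%:Z <= k)%R)
  (hfeas : exists S : 'I_n -> R, feasible p T1 T2 k S) :
  exists S : 'I_n -> R,
    optimal p w T1 T2 k mu S /\
    [/\         (* (a) *)
        (forall j, early p T1 S j -> Cj p S j <= (CstarN p j)%:R),
        (* (b) at most one idle period *)
        (forall a b a' b', idle_period p T1 S a b -> idle_period p T1 S a' b' ->
           a = a' /\ b = b'),
        (* (c),(d),(e) for the idle period, if any *)
        (forall a b, idle_period p T1 S a b ->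
           [/\ (forall j, early p T1 S j -> b <= S j ->
                  (CstarN p j)%:R - Cj p S j = Dmax p S),
               (forall i j l : 'I_n, (i <= l)%N -> (l <= j)%N ->
                  early p T1 S i -> b <= S i -> early p T1 S j -> b <= S j ->
                  early p T1 S l /\ b <= S l) &
               (forall j, early p T1 S j -> b <= S j ->
                  (forall i, early p T1 S i -> b <= S i -> S j <= S i) ->
                  (T2 <= SstarN p j)%N)]),
        (* (f) *)
        ~ later_idles p T2 S &
        (* (g) *)
        (forall j, later p T2 S j ->
           (forall i, later p T2 S i -> S j <= S i) ->
           forall i, later p T2 S i -> Delta p S i <= Delta p S j)].
Proof.
have [S [S_opt S_str]] := exists_structured_optimal p_pos w_pos wspt hT hmu hfeas.
by exists S; split; last exact S_str.
Qed.
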